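(* Let $A,B$ be integers with $A>4$ and $B>2A$, let $n\ge 1$, and let $(a_i,b_i)$, $i=0,1,\dots,n+1$, be integers with $a_0=b_0=A$, such that $s_i:=a_{i+1}-a_i\ge 0$ and $t_i:=b_{i+1}-b_i\ge 0$ for $i=0,\dots,n$, and such that $\min(a_1,b_1)\in[A,A+3]$, $a_n+b_n\le B$ and $a_{n+1}+b_{n+1}>B$. Then for any $q>0$ and any positive, smooth, convex, decreasing function $g:(0,\infty)\to(0,\infty)$, $$ \sum_{i=0}^n\big[s_i\,g(b_iq)+t_i\,g(a_iq)\big]\ge \frac 2q\int_{Aq}^{Bq}g\;-\;2B\,g(Bq/2). $$ *)

From Stdlib Require Export Reals ZArith.
From Coquelicot Require Export Coquelicot.
Open Scope R_scope.

Definition pos_on_pos (g : R -> R) : Prop := forall x, 0 < x -> 0 < g x.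

Definition smooth_on_pos (g : R -> R) : Prop :=
  forall (k : nat) (x : R), 0 < x -> ex_derive_n g k x.

Definition convex_on_pos (g : R -> R) : Prop :=
  forall x y t, 0 < x -> 0 < y -> 0 <= t <= 1 ->
    g (t * x + (1 - t) * y) <= t * g x + (1 - t) * g y.

Definition decreasing_on_pos (g : R -> R) : Prop :=
  forall x y, 0 < x -> x <= y -> g y <= g x.

(* The potential  Phi(x, y) = 2 * int_c^min(x,y) g + (max(x,y) - min(x,y)) * g(min(x,y))
   vanishes at (c, c), grows by at most  s g(y) + t g(x)  when (x, y) moves to
   (x + s, y + t) (a trapezoid bound for the convex g), and is at least
   2 int_c^D g - D g(D/2) once x + y >= D (g is decreasing).  Telescoping along the
   rescaled lattice path (a_i q, b_i q) from c = A q gives the inequality. *)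
From Stdlib Require Import Reals ZArith Lra Lia Psatz.
From Coquelicot Require Import Coquelicot.
Open Scope R_scope.

Lemma convex_chord (g : R -> R) : convex_on_pos g ->
  forall y x z, 0 < y -> y < x -> y <= z <= x ->
  (x - y) * g z <= (x - z) * g y + (z - y) * g x.
Proof.
  intros gconv y x z Hy Hyx Hz.
  set (t := (x - z) / (x - y)).
  assert (Ht : 0 <= t <= 1).
  { unfold t; split.
    - apply Rdiv_le_0_compat; lra.
    - apply (Rmult_le_reg_r (x - y)); [lra|].
      unfold Rdiv. rewrite Rmult_assoc, Rinv_l; lra. }
  pose proof (gconv y x t Hy ltac:(lra) Ht) as Hconv.
  replace (t * y + (1 - t) * x) with z in Hconv by (unfold t; field; lra).
  replace ((x - z) * g y + (z - y) * g x) with ((x - y) * (t * g y + (1 - t) * g x))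
    by (unfold t; field; lra).
  apply Rmult_le_compat_l; lra.
Qed.

Lemma nondecreasing_ge_start (u : nat -> R) (n : nat) :
  (forall k, (k <= n)%nat -> u k <= u (S k)) ->
  forall k, (k <= S n)%nat -> u 0%nat <= u k.
Proof.
  intros Hu k. induction k as [|k IH]; intros Hk.
  - lra.
  - pose proof (Hu k ltac:(lia)). pose proof (IH ltac:(lia)). lra.
Qed.

Section Potential.

Variable g : R -> R.
Hypothesis g_pos : pos_on_pos g.
Hypothesis g_cont : forall z, 0 < z -> continuous g z.
Hypothesis g_conv : convex_on_pos g.
Hypothesis g_dec : decreasing_on_pos g.

Lemma ex_RInt_pos u v : 0 < u -> 0 < v -> ex_RInt g u v.
Proof.
  intros Hu Hv. apply (ex_RInt_continuous (V:=R_CompleteNormedModule)).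
  intros z [Hz _]. apply g_cont.
  assert (0 < Rmin u v) by (apply Rmin_glb_lt; auto). lra.
Qed.

Lemma RInt_sub_same_origin c u v : 0 < c -> 0 < u -> 0 < v ->
  RInt g c u - RInt g c v = RInt g v u.
Proof.
  intros Hc Hu Hv.
  rewrite <- (RInt_Chasles g c v u) by (apply ex_RInt_pos; auto).
  unfold plus; simpl. ring.
Qed.

Lemma RInt_decreasing_bounds v u : 0 < v -> v <= u ->
  0 <= RInt g v u <= (u - v) * g v.
Proof.
  intros Hv Hvu. split.
  - apply RInt_ge_0; auto.
    + apply ex_RInt_pos; lra.
    + intros z Hz. apply Rlt_le, g_pos; lra.
  - replace ((u - v) * g v) with (RInt (fun _ => g v) v u)
      by (rewrite RInt_const; reflexivity).
    apply RInt_le; auto.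
    + apply ex_RInt_pos; lra.
    + apply ex_RInt_const.
    + intros z Hz. apply g_dec; lra.
Qed.

Lemma RInt_trapezoid y x : 0 < y -> y <= x ->
  2 * RInt g y x <= (x - y) * (g x + g y).
Proof.
  intros Hy Hyx.
  destruct (Req_dec y x) as [<-|Hne].
  { rewrite RInt_point. unfold zero; simpl. lra. }
  set (chord := fun z => ((x - z) * g y + (z - y) * g x) / (x - y)).
  set (F := fun z => ((z - y) ^ 2 * g x - (x - z) ^ 2 * g y) / (2 * (x - y))).
  assert (chord_cont : forall z, continuous chord z).
  { intros z. apply (ex_derive_continuous (V:=R_NormedModule)).
    unfold chord. auto_derive. lra. }
  assert (Hchord : RInt chord y x = (x - y) * (g x + g y) / 2).
  { apply (is_RInt_unique (V:=R_CompleteNormedModule)).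
    replace ((x - y) * (g x + g y) / 2) with (minus (F x) (F y))
      by (unfold minus, plus, opp, F; simpl; field; lra).
    apply (is_RInt_derive (V:=R_CompleteNormedModule)).
    - intros z _. unfold F, chord. auto_derive; auto. field. lra.
    - intros z _. apply chord_cont. }
  assert (RInt g y x <= RInt chord y x).
  { apply RInt_le; auto.
    - apply ex_RInt_pos; lra.
    - apply (ex_RInt_continuous (V:=R_CompleteNormedModule)). intros z _. apply chord_cont.
    - intros z Hz. unfold chord. apply (Rmult_le_reg_r (x - y)); [lra|].
      unfold Rdiv. rewrite Rmult_assoc, Rinv_l, Rmult_1_r by lra.
      rewrite Rmult_comm. apply convex_chord; auto; lra. }
  lra.
Qed.

Definition potential c x y :=
  2 * RInt g c (Rmin x y) + (Rmax x y - Rmin x y) * g (Rmin x y).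

Lemma potential_sym c x y : potential c x y = potential c y x.
Proof. unfold potential. rewrite Rmin_comm, Rmax_comm. reflexivity. Qed.

Lemma potential_diag c : potential c c c = 0.
Proof.
  unfold potential. rewrite Rmin_left, Rmax_left, RInt_point by lra.
  unfold zero; simpl. lra.
Qed.

Lemma potential_step_r c x y t : 0 < c -> 0 < x -> 0 < y -> 0 <= t ->
  potential c x (y + t) <= potential c x y + t * g x.
Proof.
  intros Hc Hx Hy Ht. unfold potential.
  destruct (Rle_lt_dec x y) as [Hxy|Hyx].
  - rewrite (Rmin_left x y), (Rmax_right x y), (Rmin_left x (y + t)),
      (Rmax_right x (y + t)) by lra.
    lra.
  - rewrite (Rmin_right x y), (Rmax_left x y) by lra.
    destruct (Rle_lt_dec x (y + t)) as [Hxyt|Hyt].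
    + rewrite (Rmin_left x (y + t)), (Rmax_right x (y + t)) by lra.
      pose proof (RInt_sub_same_origin c x y Hc Hx Hy).
      pose proof (RInt_trapezoid y x Hy ltac:(lra)). lra.
    + rewrite (Rmin_right x (y + t)), (Rmax_left x (y + t)) by lra.
      pose proof (RInt_sub_same_origin c (y + t) y Hc ltac:(lra) Hy).
      pose proof (RInt_trapezoid y (y + t) Hy ltac:(lra)).
      pose proof (convex_chord g g_conv y x (y + t) Hy Hyx ltac:(lra)). lra.
Qed.

Lemma potential_step c x y s t : 0 < c -> 0 < x -> 0 < y -> 0 <= s -> 0 <= t ->
  potential c (x + s) (y + t) <= potential c x y + s * g y + t * g x.
Proof.
  intros Hc Hx Hy Hs Ht.
  pose proof (potential_step_r c x y t Hc Hx Hy Ht).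
  pose proof (potential_step_r c (y + t) x s Hc ltac:(lra) Hx Hs).
  rewrite (potential_sym c (y + t) x), (potential_sym c (y + t) (x + s)) in *.
  assert (s * g (y + t) <= s * g y) by (apply Rmult_le_compat_l; auto; apply g_dec; lra).
  lra.
Qed.

Lemma potential_path_bound c (x y : nat -> R) n : 0 < c -> x 0%nat = c -> y 0%nat = c ->
  (forall k, (k <= n)%nat -> x k <= x (S k) /\ y k <= y (S k)) ->
  potential c (x (S n)) (y (S n)) <=
  sum_f_R0 (fun i => (x (S i) - x i) * g (y i) + (y (S i) - y i) * g (x i)) n.
Proof.
  intros Hc Hx0 Hy0 Hmono.
  assert (Hpos : forall k, (k <= S n)%nat -> c <= x k /\ c <= y k).
  { intros k Hk. rewrite <- Hx0, <- Hy0 at 1. split.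
    - apply (nondecreasing_ge_start x n); auto. intros j Hj. apply Hmono; auto.
    - apply (nondecreasing_ge_start y n); auto. intros j Hj. apply Hmono; auto. }
  assert (Hstep : forall k, (k <= n)%nat ->
    potential c (x (S k)) (y (S k)) <= potential c (x k) (y k)
      + (x (S k) - x k) * g (y k) + (y (S k) - y k) * g (x k)).
  { intros k Hk. destruct (Hpos k ltac:(lia)). destruct (Hmono k Hk).
    replace (x (S k)) with (x k + (x (S k) - x k)) at 1 by ring.
    replace (y (S k)) with (y k + (y (S k) - y k)) at 1 by ring.
    apply potential_step; lra. }
  induction n as [|n IH].
  - pose proof (Hstep 0%nat (le_n _)) as Hfirst.
    rewrite Hx0, Hy0, potential_diag in Hfirst. simpl. rewrite Hx0, Hy0. lra.
  - pose proof (Hstep (S n) (le_n _)).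
    assert (potential c (x (S n)) (y (S n)) <= sum_f_R0
      (fun i => (x (S i) - x i) * g (y i) + (y (S i) - y i) * g (x i)) n).
    { apply IH; intros k Hk; [apply Hmono | apply Hpos | apply Hstep]; lia. }
    simpl. lra.
Qed.

Lemma potential_ge c D x y : 0 < c -> 2 * c < D -> c <= x -> c <= y -> D <= x + y ->
  2 * RInt g c D - D * g (D / 2) <= potential c x y.
Proof.
  intros Hc HD Hx Hy Hxy. unfold potential.
  set (m := Rmin x y). set (M := Rmax x y).
  assert (Hm : c <= m) by (apply Rmin_glb; auto).
  assert (HmM : m + M = x + y /\ m <= M).
  { unfold m, M. destruct (Rle_dec x y).
    - rewrite Rmin_left, Rmax_right by lra. lra.
    - rewrite Rmin_right, Rmax_left by lra. lra. }
  pose proof (RInt_sub_same_origin c D (D / 2) Hc ltac:(lra) ltac:(lra)).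
  pose proof (RInt_decreasing_bounds (D / 2) D ltac:(lra) ltac:(lra)).
  assert (0 < g m) by (apply g_pos; lra).
  destruct (Rle_lt_dec (D / 2) m) as [Hhalf|Hhalf].
  - pose proof (RInt_sub_same_origin c m (D / 2) Hc ltac:(lra) ltac:(lra)).
    pose proof (RInt_decreasing_bounds (D / 2) m ltac:(lra) Hhalf).
    assert (0 <= (M - m) * g m) by (apply Rmult_le_pos; lra).
    lra.
  - pose proof (RInt_sub_same_origin c (D / 2) m Hc ltac:(lra) ltac:(lra)).
    pose proof (RInt_decreasing_bounds m (D / 2) ltac:(lra) ltac:(lra)).
    assert ((D - 2 * m) * g m <= (M - m) * g m) by (apply Rmult_le_compat_r; lra).
    lra.
Qed.

Lemma lattice_path_sum_ge c D (x y : nat -> R) n : 0 < c -> 2 * c < D ->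
  x 0%nat = c -> y 0%nat = c ->
  (forall k, (k <= n)%nat -> x k <= x (S k) /\ y k <= y (S k)) ->
  D <= x (S n) + y (S n) ->
  2 * RInt g c D - D * g (D / 2) <=
  sum_f_R0 (fun i => (x (S i) - x i) * g (y i) + (y (S i) - y i) * g (x i)) n.
Proof.
  intros Hc HD Hx0 Hy0 Hmono Hend.
  assert (Hmono_x : forall k, (k <= n)%nat -> x k <= x (S k)) by apply Hmono.
  assert (Hmono_y : forall k, (k <= n)%nat -> y k <= y (S k)) by apply Hmono.
  eapply Rle_trans; [apply potential_ge | apply potential_path_bound]; auto.
  - rewrite <- Hx0. exact (nondecreasing_ge_start x n Hmono_x (S n) (le_n _)).
  - rewrite <- Hy0. exact (nondecreasing_ge_start y n Hmono_y (S n) (le_n _)).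
Qed.

End Potential.

Theorem lemma8 (A B : Z) (n : nat) (a b : nat -> Z) (q : R) (g : R -> R)
  (hA : (A > 4)%Z) (hB : (B > 2 * A)%Z) (hn : (1 <= n)%nat)
  (ha0 : a 0%nat = A) (hb0 : b 0%nat = A)
  (hs : forall i : nat, (i <= n)%nat -> (a (S i) - a i >= 0)%Z)
  (ht : forall i : nat, (i <= n)%nat -> (b (S i) - b i >= 0)%Z)
  (hmin : (A <= Z.min (a 1%nat) (b 1%nat) <= A + 3)%Z)
  (hnB : (a n + b n <= B)%Z)
  (hn1B : (a (S n) + b (S n) > B)%Z)
  (hq : 0 < q)
  (gpos : pos_on_pos g) (gsmooth : smooth_on_pos g)
  (gconv : convex_on_pos g) (gdec : decreasing_on_pos g) :
  sum_f_R0 (fun i => IZR (a (S i) - a i) * g (IZR (b i) * q)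
                     + IZR (b (S i) - b i) * g (IZR (a i) * q)) n
  >= 2 / q * RInt g (IZR A * q) (IZR B * q) - 2 * IZR B * g (IZR B * q / 2).
Proof.
  set (x := fun i => IZR (a i) * q). set (y := fun i => IZR (b i) * q).
  set (c := IZR A * q). set (D := IZR B * q).
  assert (gcont : forall z, 0 < z -> continuous g z)
    by (intros z Hz; exact (ex_derive_continuous g z (gsmooth 1%nat z Hz))).
  assert (HA : 4 < IZR A) by (apply IZR_lt; lia).
  assert (HAB : 2 * IZR A < IZR B) by (rewrite <- mult_IZR; apply IZR_lt; lia).
  assert (Hmono : forall k, (k <= n)%nat -> x k <= x (S k) /\ y k <= y (S k)).
  { intros k Hk. pose proof (hs k Hk). pose proof (ht k Hk).
    unfold x, y; split; apply Rmult_le_compat_r; try lra; apply IZR_le; lia. }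
  assert (Hc : 0 < c) by (unfold c; nra).
  assert (Hx0 : x 0%nat = c) by (unfold x, c; now rewrite ha0).
  assert (Hy0 : y 0%nat = c) by (unfold y, c; now rewrite hb0).
  assert (HD : D <= x (S n) + y (S n))
    by (unfold D, x, y; rewrite <- Rmult_plus_distr_r, <- plus_IZR;
        apply Rmult_le_compat_r; [lra | apply IZR_le; lia]).
  pose proof (lattice_path_sum_ge g gpos gcont gconv gdec c D x y n Hc
    ltac:(unfold c, D; nra) Hx0 Hy0 Hmono HD) as Hpath.
  rewrite (sum_eq _ (fun i => (IZR (a (S i) - a i) * g (IZR (b i) * q)
      + IZR (b (S i) - b i) * g (IZR (a i) * q)) * q)) in Hpath
    by (intros i _; unfold x, y; rewrite !minus_IZR; ring).
  rewrite <- scal_sum in Hpath. fold c D.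
  assert (0 < g (D / 2)) by (apply gpos; unfold D; nra).
  assert (0 <= D * g (D / 2)) by (apply Rmult_le_pos; [unfold D; nra | lra]).
  apply Rle_ge, (Rmult_le_reg_r q); auto.
  replace ((2 / q * RInt g c D - 2 * IZR B * g (D / 2)) * q)
    with (2 * RInt g c D - 2 * D * g (D / 2)) by (unfold D; field; lra).
  lra.
Qed.
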